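(* Let $\mathfrak{k}$ be a field, $n\ge2$, and ${\mathcal A}=(x_{i_1\ldots i_n})_{1\le i_j\le r_j}$ a box-shaped matrix of distinct indeterminates with polynomial ring $\mathfrak{k}[{\mathcal A}]$. Order the variables by $x_{i_1\ldots i_n}\le x_{j_1\ldots j_n}$ if and only if $(i_1,\dots,i_n)\le(j_1,\dots,j_n)$ in the lexicographic order on ${\mathbb N}^n$, and use the degree reverse lexicographic monomial order induced by this variable order. Then the set of all $2\times2$ minors of ${\mathcal A}$ is a Gröbner basis of $I_2({\mathcal A})$.
   Context: $\mathfrak{k}$ is algebraically closed of characteristic $0$. The $2\times2$ minors of a box-shaped matrix $(a_{i_1\ldots i_n})$ are $a_{i_1\ldots i_l\ldots i_n}a_{j_1\ldots j_l\ldots j_n}-a_{i_1\ldots i_{l-1}j_li_{l+1}\ldots i_n}a_{j_1\ldots j_{l-1}i_lj_{l+1}\ldots j_n}$ for any coordinate $l\in\{1,\dots,n\}$ and any two index points; $I_2({\mathcal A})$ is the ideal they generate. *)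

From HB Require Import structures.
From mathcomp Require Import all_boot all_order all_algebra.
From mathcomp Require Import multinomials.mpoly.
Set Implicit Arguments. Unset Strict Implicit. Unset Printing Implicit Defensive.
Import GRing.Theory.
Local Open Scope ring_scope.

(* Index points of an n-dimensional box with sides r 0, ..., r (n-1):
   tuples (i_1,...,i_n) with i_j in 'I_(r j) (0-based instead of 1-based). *)
Definition idx (n : nat) (r : 'I_n -> nat) : finType :=
  {dffun forall j : 'I_n, 'I_(r j)}.

Definition nvars (n : nat) (r : 'I_n -> nat) : nat := #|idx r|.

Definition polyA (K : fieldType) (n : nat) (r : 'I_n -> nat) :=
  {mpoly K[nvars r]}.

Definition xvar (K : fieldType) (n : nat) (r : 'I_n -> nat) (a : idx r)
  : polyA K r := 'X_(enum_rank a).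

Definition lexlt (n : nat) (r : 'I_n -> nat) (a b : idx r) : bool :=
  [exists l : 'I_n,
     [forall j : 'I_n, (j < l)%N ==> (val (a j) == val (b j))]
     && (val (a l) < val (b l))%N].

Definition varlt (n : nat) (r : 'I_n -> nat) (v w : 'I_(nvars r)) : bool :=
  lexlt (enum_val v) (enum_val w).

Definition drl_lt (n : nat) (r : 'I_n -> nat) (m m' : 'X_{1..nvars r}) : Prop :=
  (mdeg m < mdeg m')%N \/
  (mdeg m = mdeg m' /\
   exists v : 'I_(nvars r),
     (forall w, varlt w v -> m w = m' w) /\ (m' v < m v)%N).

Definition is_lead_mon (K : fieldType) (n : nat) (r : 'I_n -> nat)
  (p : polyA K r) (m : 'X_{1..nvars r}) : Prop :=
  m \in msupp p /\ forall m', m' \in msupp p -> m' = m \/ drl_lt m' m.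

Definition ideal_gen (K : fieldType) (n : nat) (r : 'I_n -> nat)
  (S : polyA K r -> Prop) (f : polyA K r) : Prop :=
  exists s : seq (polyA K r * polyA K r),
    (forall c g, (c, g) \in s -> S g) /\
    f = \sum_(cg <- s) cg.1 * cg.2.

Definition groebner_basis (K : fieldType) (n : nat) (r : 'I_n -> nat)
  (G I : polyA K r -> Prop) : Prop :=
  (forall g, G g -> I g) /\
  forall f, I f -> f != 0 ->
    exists g mg mf, [/\ G g, g != 0, is_lead_mon g mg, is_lead_mon f mf
                      & (mg <= mf)%MM].

Definition swapc (n : nat) (r : 'I_n -> nat) (l : 'I_n) (a b : idx r) : idx r :=
  [ffun j => if j == l then b j else a j].

Definition minor2 (K : fieldType) (n : nat) (r : 'I_n -> nat)
  (l : 'I_n) (a b : idx r) : polyA K r :=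
  xvar K a * xvar K b - xvar K (swapc l a b) * xvar K (swapc l b a).

Definition minors2 (K : fieldType) (n : nat) (r : 'I_n -> nat)
  (p : polyA K r) : Prop :=
  exists l a b, p = minor2 K l a b.

Definition I2 (K : fieldType) (n : nat) (r : 'I_n -> nat) : polyA K r -> Prop :=
  ideal_gen (@minors2 K n r).

From HB Require Import structures.
From mathcomp Require Import all_boot all_order all_algebra.
From mathcomp Require Import multinomials.mpoly.

(* Every minor is a binomial x^U - x^U' whose two monomials have
   the same marginals (for each coordinate j, the multiset of j-th indices of
   its variables).  Hence, for any monomial m0, the sum of the coefficients of
   f in I_2 over the fiber of m0 (the monomials with the marginals of m0) is 0.
   Call m0 sorted if its variables form a chain for the componentwise order.
   A sorted monomial is determined by its marginals, and an unsorted one can be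
   lowered within its fiber by swapping an incomparable pair, so a sorted m0 is
   the least monomial of its fiber.  If the leading monomial m0 of f were
   sorted, the fiber sum of f at m0 would thus be its leading coefficient.  So
   m0 contains an incomparable pair x_a x_b, and x_a x_b is the leading
   monomial of a minor. *)

Set Implicit Arguments. Unset Strict Implicit. Unset Printing Implicit Defensive.
Import GRing.Theory.

Lemma ex_least_in_seq (T : eqType) (lt : T -> T -> Prop) (s : seq T) :
  (forall x y z, x \in s -> y \in s -> z \in s -> lt x y -> lt y z -> lt x z) ->
  (forall x y, x \in s -> y \in s -> x <> y -> lt x y \/ lt y x) ->
  s <> [::] -> exists2 x, x \in s & forall y, y \in s -> y = x \/ lt x y.
Proof.
elim: s => [//|a s IH] lt_trans lt_total _.
case: s IH lt_trans lt_total => [|b s] IH lt_trans lt_total.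
  by exists a => [|y]; rewrite ?mem_seq1 // => /eqP ->; left.
have [||//|x xs x_least] := IH.
- by move=> x y z xs ys zs; apply: lt_trans; rewrite inE ?xs ?ys ?zs orbT.
- by move=> x y xs ys; apply: lt_total; rewrite inE ?xs ?ys orbT.
have a_in : a \in [:: a, b & s] by rewrite inE eqxx.
have x_in : x \in [:: a, b & s] by rewrite inE xs orbT.
have [ax|/eqP ax] := eqVneq a x.
  by exists a => // y; rewrite ax inE => /orP[/eqP ->|/x_least]; [left|].
have [lt_ax|lt_xa] := lt_total a x a_in x_in ax.
  exists a => // y; rewrite inE => /orP[/eqP ->|ys]; first by left.
  right; have [->|] := x_least y ys; first by [].
  by apply: lt_trans; rewrite // inE ys orbT.
by exists x => // y; rewrite inE => /orP[/eqP ->|/x_least]; [right|].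
Qed.

Section BoxMatrix.
Variables (n : nat) (r : 'I_n -> nat).
Local Notation T := (idx r).
Local Notation M := ('X_{1..nvars r}).

Lemma lexltP (a b : T) : reflect (exists l : 'I_n,
   (forall j : 'I_n, (j < l)%N -> val (a j) = val (b j)) /\ (val (a l) < val (b l))%N)
   (lexlt a b).
Proof.
apply: (iffP existsP) => [[l /andP[/forallP eq_a_b lt_l]]|[l [eq_a_b lt_l]]].
  by exists l; split => // j jl; apply/eqP; move: (eq_a_b j); rewrite jl.
by exists l; rewrite lt_l andbT; apply/forallP => j; apply/implyP => /eq_a_b ->.
Qed.

Lemma lexlt_irr (a : T) : ~~ lexlt a a.
Proof. by apply/lexltP => -[l [_]]; rewrite ltnn. Qed.

Lemma lexlt_trans (a b c : T) : lexlt a b -> lexlt b c -> lexlt a c.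
Proof.
move=> /lexltP[l1 [E1 L1]] /lexltP[l2 [E2 L2]]; apply/lexltP.
case: (ltngtP l1 l2) => [lt12|lt21|/val_inj eq12].
- exists l1; split; last by rewrite -(E2 _ lt12).
  by move=> j jl; rewrite E1 // E2 //; apply: ltn_trans lt12.
- exists l2; split; last by rewrite (E1 _ lt21).
  by move=> j jl; rewrite E1 ?E2 //; apply: ltn_trans lt21.
- subst l2; exists l1; split; last exact: ltn_trans L2.
  by move=> j jl; rewrite E1 ?E2.
Qed.

Lemma lexlt_total (a b : T) : a != b -> lexlt a b \/ lexlt b a.
Proof.
move=> ab; pose s := [seq j <- enum 'I_n | val (a j) != val (b j)].
have [|||l l_in l_least] := @ex_least_in_seq _ (fun x y : 'I_n => (x < y)%N) s.
- by move=> x y z _ _ _; apply: ltn_trans.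
- move=> x y _ _ xy; case: (ltngtP x y) => [||/val_inj/xy //]; by [left|right].
- move=> s0; case/eqP: ab; apply/ffunP => j; apply/val_inj/eqP/negbNE/negP => ne.
  have : j \in s by rewrite mem_filter ne mem_enum.
  by rewrite s0.
have eq_below (j : 'I_n) : (j < l)%N -> val (a j) = val (b j).
  move=> jl; apply/eqP/negbNE/negP => ne.
  have /l_least[/val_eqP jl'|lj] : j \in s by rewrite mem_filter ne mem_enum.
    by rewrite (eqP jl') ltnn in jl.
  by have := ltn_trans jl lj; rewrite ltnn.
move: l_in; rewrite mem_filter => /andP[ne _].
case: (ltngtP (a l) (b l)) => [lt|gt|eq]; last by case/eqP: ne.
  by left; apply/lexltP; exists l.
by right; apply/lexltP; exists l; split => // j /eq_below ->.
Qed.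

Lemma varlt_irr (v : 'I_(nvars r)) : ~~ varlt v v.
Proof. exact: lexlt_irr. Qed.

Lemma varlt_trans (u v w : 'I_(nvars r)) : varlt u v -> varlt v w -> varlt u w.
Proof. exact: lexlt_trans. Qed.

Lemma varlt_total (v w : 'I_(nvars r)) : v != w -> varlt v w \/ varlt w v.
Proof. by move=> vw; apply: lexlt_total; apply: contra vw => /eqP/enum_val_inj ->. Qed.

Lemma drl_lt_irr (m : M) : ~ drl_lt m m.
Proof. by case=> [|[_ [v [_]]]]; rewrite ltnn. Qed.

Lemma drl_lt_trans (m1 m2 m3 : M) : drl_lt m1 m2 -> drl_lt m2 m3 -> drl_lt m1 m3.
Proof.
case=> [d12|[d12 [v1 [E1 L1]]]] [d23|[d23 [v2 [E2 L2]]]].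
- by left; apply: ltn_trans d23.
- by left; rewrite -d23.
- by left; rewrite d12.
right; split; first by rewrite d12.
have [eq12|/varlt_total[lt|lt]] := eqVneq v1 v2.
- subst v2; exists v1; split; last exact: ltn_trans L1.
  by move=> w wv; rewrite E1 ?E2.
- exists v1; split; last by rewrite -(E2 _ lt).
  by move=> w wv; rewrite E1 ?E2 //; apply: varlt_trans lt.
- exists v2; split; last by rewrite (E1 _ lt).
  by move=> w wv; rewrite E1 ?E2 //; apply: varlt_trans lt.
Qed.

Lemma drl_lt_total (m1 m2 : M) : m1 <> m2 -> drl_lt m1 m2 \/ drl_lt m2 m1.
Proof.
move=> ne.
case: (ltngtP (mdeg m1) (mdeg m2)) => [lt|gt|eq_deg]; [by left; left|by right; left|].
pose s := [seq v <- enum 'I_(nvars r) | m1 v != m2 v].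
have [|||v v_in v_least] := @ex_least_in_seq _ (@varlt n r) s.
- by move=> x y z _ _ _; apply: varlt_trans.
- by move=> x y _ _ /eqP; apply: varlt_total.
- move=> s0; apply: ne; apply/mnmP => w; apply/eqP/negbNE/negP => ne_w.
  have : w \in s by rewrite mem_filter ne_w mem_enum.
  by rewrite s0.
have eq_below w : varlt w v -> m1 w = m2 w.
  move=> wv; apply/eqP/negbNE/negP => ne_w.
  have /v_least[eq_wv|vw] : w \in s by rewrite mem_filter ne_w mem_enum.
    by rewrite eq_wv (negbTE (varlt_irr v)) in wv.
  by have := varlt_trans wv vw; rewrite (negbTE (varlt_irr w)).
move: v_in; rewrite mem_filter => /andP[ne_v _].
case: (ltngtP (m1 v) (m2 v)) => [lt|gt|eq]; last by rewrite eq eqxx in ne_v.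
  by right; right; split => //; exists v; split => // w /eq_below ->.
by left; right; split => //; exists v.
Qed.

Lemma drl_ltD2l (u m1 m2 : M) : drl_lt m1 m2 -> drl_lt (u + m1)%MM (u + m2)%MM.
Proof.
rewrite /drl_lt !mdegD ltn_add2l.
case=> [d|[d [v [E L]]]]; [by left|right; split; first by rewrite d].
exists v; split; last by rewrite !mnmDE ltn_add2l.
by move=> w wv; rewrite !mnmDE E.
Qed.

Definition xmon (a : T) : M := U_(enum_rank a)%MM.

Lemma xmonE (a : T) (w : 'I_(nvars r)) : xmon a w = (a == enum_val w).
Proof.
rewrite /xmon mnm1E; congr nat_of_bool.
by apply/eqP/eqP => [<-|->]; rewrite ?enum_rankK ?enum_valK.
Qed.

Lemma mdeg_xmon2 (a b : T) : mdeg (xmon a + xmon b)%MM = 2.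
Proof. by rewrite mdegD !mdeg1. Qed.

Lemma xmon2_le (m : M) (a b : T) : a != b ->
  (0 < m (enum_rank a))%N -> (0 < m (enum_rank b))%N -> (xmon a + xmon b <= m)%MM.
Proof.
move=> ab ma mb; apply/mnm_lepP => w; rewrite mnmDE !xmonE.
have [ea|_] := eqVneq a (enum_val w); have [eb|_] //= := eqVneq b (enum_val w).
- by rewrite ea eb eqxx in ab.
- by rewrite ea enum_valK in ma.
- by rewrite eb enum_valK in mb.
Qed.

Lemma lexlt_swapc (a b : T) (l : 'I_n) : lexlt a b -> (b l < a l)%N ->
  [/\ lexlt (swapc l a b) a, lexlt (swapc l a b) b
    & lexlt (swapc l a b) (swapc l b a)].
Proof.
move=> /lexltP[p [eq_below lt_p]] lt_l.
have lt_pl : (p < l)%N.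
  case: (ltngtP p l) => [//|lp|/val_inj epl].
    by move: lt_l; rewrite (eq_below l lp) ltnn.
  by move: lt_p; rewrite epl => /(ltn_trans lt_l); rewrite ltnn.
have neq_l (j : 'I_n) : (j < l)%N -> (j == l) = false.
  by move=> jl; apply/negbTE; apply: contraTneq jl => ->; rewrite ltnn.
have below_p (j : 'I_n) : (j < p)%N -> (j < l)%N by move/ltn_trans; apply.
split; apply/lexltP.
- by exists l; split => [j jl|]; rewrite !ffunE ?eqxx ?neq_l.
- exists p; split => [j jp|]; last by rewrite !ffunE neq_l.
  by rewrite !ffunE neq_l ?eq_below ?below_p.
- exists p; split => [j jp|]; last by rewrite !ffunE neq_l.
  by rewrite !ffunE neq_l ?eq_below ?below_p.
Qed.

(* [swapc l a b] is lex-smaller than the other three indices, so the first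
   variable in which the two monomials differ is [x_(swapc l a b)]. *)
Lemma drl_lt_swapc (a b : T) (l : 'I_n) : lexlt a b -> (b l < a l)%N ->
  drl_lt (xmon (swapc l a b) + xmon (swapc l b a))%MM (xmon a + xmon b)%MM.
Proof.
move=> ab lt_l; have [lt_a lt_b lt_b'] := lexlt_swapc ab lt_l.
set a' := swapc l a b in lt_a lt_b lt_b' *; set b' := swapc l b a in lt_b' *.
have neq_lt (c c' : T) : lexlt c c' -> (c' == c) = false.
  by move=> cc'; apply: contraTF cc' => /eqP ->; apply: lexlt_irr.
right; split; first by rewrite !mdeg_xmon2.
exists (enum_rank a'); split; rewrite /varlt.
  move=> w; rewrite enum_rankK => lt_w; rewrite !mnmDE !xmonE.
  rewrite (neq_lt _ _ lt_w) (neq_lt _ _ (lexlt_trans lt_w lt_a)).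
  by rewrite (neq_lt _ _ (lexlt_trans lt_w lt_b)) (neq_lt _ _ (lexlt_trans lt_w lt_b')).
by rewrite !mnmDE !xmonE enum_rankK eqxx (neq_lt _ _ lt_a) (neq_lt _ _ lt_b).
Qed.

Definition idx_le (a b : T) : bool := [forall j, (a j <= b j)%N].

Lemma idx_le_refl (a : T) : idx_le a a.
Proof. by apply/forallP => j. Qed.

Lemma idx_le_trans (a b c : T) : idx_le a b -> idx_le b c -> idx_le a c.
Proof.
by move=> /forallP ab /forallP bc; apply/forallP => j; apply: leq_trans (ab j) (bc j).
Qed.

Lemma idx_le_anti (a b : T) : idx_le a b -> idx_le b a -> a = b.
Proof.
move=> /forallP ab /forallP ba; apply/ffunP => j; apply/val_inj/eqP.
by rewrite eqn_leq ab ba.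
Qed.

Lemma drl_lt_swap_incomparable (a b : T) : lexlt a b -> ~~ idx_le a b ->
  exists l, drl_lt (xmon (swapc l a b) + xmon (swapc l b a))%MM (xmon a + xmon b)%MM.
Proof.
by move=> ab /forallPn[l]; rewrite -ltnNge => lt_l; exists l; apply: drl_lt_swapc.
Qed.

Definition marginal (m : M) (j : 'I_n) (v : 'I_(r j)) : nat :=
  \sum_(c : T | c j == v) m (enum_rank c).
Arguments marginal : clear implicits.

Lemma marginal_xmon (c : T) j v : marginal (xmon c) j v = (c j == v).
Proof.
rewrite /marginal; under eq_bigr => c' _ do rewrite xmonE enum_rankK.
have [cj|ncj] := boolP (c j == v).
  rewrite (bigD1 c) //= eqxx big1 // => c' /andP[_ ne].
  by rewrite eq_sym (negbTE ne).
by rewrite big1 // => c' c'j; case: eqP => // ec; rewrite ec c'j in ncj.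
Qed.

Lemma marginalD (m1 m2 : M) j v :
  marginal (m1 + m2)%MM j v = (marginal m1 j v + marginal m2 j v)%N.
Proof. by rewrite /marginal -big_split; apply: eq_bigr => c _; rewrite mnmDE. Qed.

Lemma marginal_swapc (l : 'I_n) (a b : T) j v :
  marginal (xmon (swapc l a b) + xmon (swapc l b a))%MM j v =
  marginal (xmon a + xmon b)%MM j v.
Proof.
by rewrite !marginalD !marginal_xmon !ffunE; case: (j == l); rewrite // addnC.
Qed.

Definition fiber (m0 m : M) : bool := (mdeg m == mdeg m0) &&
  [forall j : 'I_n, [forall v : 'I_(r j), marginal m j v == marginal m0 j v]].

Lemma fiberP (m0 m : M) : reflect
  (mdeg m = mdeg m0 /\ forall j v, marginal m j v = marginal m0 j v) (fiber m0 m).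
Proof.
apply: (iffP andP) => [[/eqP deg_m /forallP marg_m]|[-> marg_m]].
  by split => // j v; move/forallP: (marg_m j) => /(_ v)/eqP.
by split => //; apply/forallP => j; apply/forallP => v; rewrite marg_m.
Qed.

Lemma fiberDl (m0 m U U' : M) : mdeg U = mdeg U' ->
  (forall j v, marginal U j v = marginal U' j v) ->
  fiber m0 (m + U)%MM = fiber m0 (m + U')%MM.
Proof.
move=> deg_U marg_U; rewrite /fiber !mdegD deg_U; congr (_ && _).
by apply: eq_forallb => j; apply: eq_forallb => v; rewrite !marginalD marg_U.
Qed.

Lemma fiber_enum (m0 : M) : exists s : seq M, forall m, (m \in s) = fiber m0 m.
Proof.
exists [seq val m | m in [pred m : bmultinom (nvars r) (mdeg m0).+1 | fiber m0 m]] => m.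
apply/imageP/idP => [[mb fib_mb ->] //|fib_m].
have deg_m : (mdeg m < (mdeg m0).+1)%N by case/fiberP: fib_m => ->.
by exists (BMultinom deg_m).
Qed.

Definition sorted_mon (m : M) : bool := [forall a : T, [forall b : T,
  ((0 < m (enum_rank a)) && (0 < m (enum_rank b)))%N ==> idx_le a b || idx_le b a]].

Lemma sorted_monB (m u : M) : sorted_mon m -> sorted_mon (m - u)%MM.
Proof.
move=> /forallP sorted_m; apply/forallP => a; apply/forallP => b.
rewrite !mnmBE; apply/implyP => /andP[ma mb].
move/forallP: (sorted_m a) => /(_ b)/implyP; apply.
by rewrite (leq_trans ma (leq_subr _ _)) (leq_trans mb (leq_subr _ _)).
Qed.

Lemma sorted_mon_least (m : M) : sorted_mon m -> (0 < mdeg m)%N -> exists a : T,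
  (0 < m (enum_rank a))%N /\ forall b, (0 < m (enum_rank b))%N -> idx_le a b.
Proof.
move=> sorted_m deg_m; pose s := [seq c <- enum T | (0 < m (enum_rank c))%N].
have [|||a a_in a_least] := @ex_least_in_seq _ (fun x y => x != y /\ idx_le x y) s.
- move=> x y z _ _ _ [xy le_xy] [yz le_yz]; split; last exact: idx_le_trans le_yz.
  by apply: contra_neq xy => exz; rewrite exz in le_xy *; apply: idx_le_anti.
- move=> x y; rewrite !mem_filter => /andP[mx _] /andP[my _] /eqP xy.
  move/forallP: sorted_m => /(_ x)/forallP/(_ y); rewrite mx my /=.
  by case/orP; [left|right; rewrite eq_sym].
- move=> s0; move: deg_m; rewrite mdegE lt0n sum_nat_eq0 => /forallPn[i].
  rewrite -lt0n => mi; have : enum_val i \in s.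
    by rewrite mem_filter enum_valK mi mem_enum.
  by rewrite s0.
exists a; split; first by move: a_in; rewrite mem_filter => /andP[].
move=> b mb; have /a_least[->|[]//] : b \in s by rewrite mem_filter mb mem_enum.
exact: idx_le_refl.
Qed.

Lemma marginal_gt0P (m : M) j v : reflect
  (exists c : T, c j = v /\ (0 < m (enum_rank c))%N) (0 < marginal m j v)%N.
Proof.
rewrite /marginal lt0n sum_nat_eq0 negb_forall.
apply: (iffP existsP) => [[c]|[c [cj mc]]].
  by rewrite negb_imply -lt0n => /andP[/eqP cj mc]; exists c.
by exists c; rewrite negb_imply cj eqxx -lt0n.
Qed.

Lemma marginal_gt0 (m : M) (c : T) j :
  (0 < m (enum_rank c))%N -> (0 < marginal m j (c j))%N.
Proof. by move=> mc; apply/marginal_gt0P; exists c. Qed.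

Lemma least_le_marginal (m : M) (a c : T) j :
  (forall b, (0 < m (enum_rank b))%N -> idx_le a b) ->
  (0 < marginal m j (c j))%N -> (a j <= c j)%N.
Proof. by move=> a_least /marginal_gt0P[c' [<- /a_least /forallP]]. Qed.

(* The least element of a chain is read off the marginals: its [j]-th
   coordinate is the least [v] with a positive [j]-marginal. *)
Lemma sorted_mon_marginal_inj (m m' : M) : mdeg m = mdeg m' ->
  sorted_mon m -> sorted_mon m' ->
  (forall j v, marginal m j v = marginal m' j v) -> m = m'.
Proof.
move eq_d: (mdeg m) => d; elim: d m m' eq_d => [|d IH] m m' deg_m deg_m' sm sm' marg.
  have /eqP -> : m == 0%MM by rewrite -mdeg_eq0 deg_m.
  by have /eqP -> : m' == 0%MM by rewrite -mdeg_eq0 -deg_m'.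
have [|a [ma a_least]] := sorted_mon_least sm; first by rewrite deg_m.
have [|a' [ma' a'_least]] := sorted_mon_least sm'; first by rewrite -deg_m'.
have eq_aa' : a = a'.
  apply/ffunP => j; apply/val_inj/eqP; rewrite eqn_leq.
  rewrite (least_le_marginal a_least) ?(least_le_marginal a'_least) //.
    by rewrite -marg marginal_gt0.
  by rewrite marg marginal_gt0.
subst a'.
have le_m : (xmon a <= m)%MM by rewrite lep1mP -lt0n.
have le_m' : (xmon a <= m')%MM by rewrite lep1mP -lt0n.
have deg_sub (x : M) : (xmon a <= x)%MM -> mdeg x = d.+1 -> mdeg (x - xmon a)%MM = d.
  move=> le_x deg_x; have := mdegD (x - xmon a) (xmon a).
  by rewrite submK // deg_x mdeg1 addn1 => -[].
rewrite -(submK le_m) -(submK le_m'); congr (_ + _)%MM.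
apply: IH; rewrite ?deg_sub ?sorted_monB //.
move=> j v; apply/eqP; rewrite -(eqn_add2r (marginal (xmon a) j v)) -!marginalD.
by rewrite !submK // marg.
Qed.

Lemma unsorted_mon_swap (m : M) : ~~ sorted_mon m -> exists (a b : T) l,
  (xmon a + xmon b <= m)%MM /\
  drl_lt (xmon (swapc l a b) + xmon (swapc l b a))%MM (xmon a + xmon b)%MM.
Proof.
case/forallPn => a /forallPn[b]; rewrite negb_imply negb_or.
case/andP=> /andP[ma mb] /andP[nab nba].
have ab : a != b by apply: contraNneq nab => ->; apply: idx_le_refl.
have le_m := xmon2_le ab ma mb.
case: (lexlt_total ab) => [lt_ab|lt_ba].
  by have [l lt] := drl_lt_swap_incomparable lt_ab nab; exists a, b, l.
have [l lt] := drl_lt_swap_incomparable lt_ba nba.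
by exists b, a, l; split; rewrite // addmC.
Qed.

(* A drl-least element of the fiber cannot contain an incomparable pair, since
   swapping it stays in the fiber and lowers the monomial. *)
Lemma sorted_mon_fiber_least (m0 m : M) : sorted_mon m0 -> fiber m0 m -> m <> m0 ->
  drl_lt m0 m.
Proof.
move=> sorted_m0 fib_m ne_m; have [s mem_s] := fiber_enum m0.
have [|||mu mu_in mu_least] := @ex_least_in_seq _ (@drl_lt n r) s.
- by move=> x y z _ _ _; apply: drl_lt_trans.
- by move=> x y _ _; apply: drl_lt_total.
- by move=> s0; have := mem_s m; rewrite s0 fib_m.
have /fiberP[deg_mu marg_mu] : fiber m0 mu by rewrite -mem_s.
have sorted_mu : sorted_mon mu.
  apply/negPn/negP => /unsorted_mon_swap[a [b [l [le_mu lt_swap]]]].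
  set U := (xmon a + xmon b)%MM in le_mu lt_swap.
  set U' := (xmon _ + xmon _)%MM in lt_swap.
  have lt_mu : drl_lt (mu - U + U')%MM mu.
    by rewrite -[X in drl_lt _ X](submK le_mu); apply: drl_ltD2l.
  have : (mu - U + U')%MM \in s.
    rewrite mem_s -(@fiberDl m0 _ U) ?submK -?mem_s ?mdeg_xmon2 // => j v.
    by rewrite marginal_swapc.
  case/mu_least => [eq_mu|/drl_lt_trans/(_ lt_mu)]; last exact: drl_lt_irr.
  by rewrite eq_mu in lt_mu; case: (drl_lt_irr lt_mu).
have eq_mu : mu = m0 by apply: sorted_mon_marginal_inj; rewrite ?deg_mu.
subst mu; by have /mu_least[/ne_m|] : m \in s by rewrite mem_s.
Qed.

Variable K : fieldType.
Local Notation P := (polyA K r).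
Local Open Scope ring_scope.

Lemma ex_lead_mon (f : P) : f != 0 -> exists m, is_lead_mon f m.
Proof.
move=> f_neq0.
have [|||m m_in m_max] := @ex_least_in_seq _ (fun x y => drl_lt y x) (msupp f).
- by move=> x y z _ _ _ xy yz; apply: drl_lt_trans yz xy.
- by move=> x y _ _ /drl_lt_total[]; [right|left].
- by move=> supp0; move: f_neq0; rewrite (mpolyE f) supp0 big_nil eqxx.
by exists m.
Qed.

Lemma lead_mon_binomial (U U' : M) : drl_lt U' U ->
  ('X_[U] - 'X_[U'] : P) != 0 /\ is_lead_mon ('X_[U] - 'X_[U'] : P) U.
Proof.
move=> lt_U'U; have UU' : (U' == U) = false.
  by apply/negbTE/eqP => eq_U; rewrite eq_U in lt_U'U; apply: drl_lt_irr lt_U'U.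
have coef_U : ('X_[U] - 'X_[U'] : P)@_U = 1 by rewrite mcoeffB !mcoeffX eqxx UU' subr0.
split; first by apply: contra_eq_neq coef_U => ->; rewrite mcoeff0 eq_sym oner_eq0.
split; first by rewrite mcoeff_msupp coef_U oner_eq0.
move=> m; rewrite mcoeff_msupp mcoeffB !mcoeffX.
have [->|_] := eqVneq U m; first by left.
have [<-|_] := eqVneq U' m; first by right.
by rewrite subrr eqxx.
Qed.

Lemma minor2E (l : 'I_n) (a b : T) : minor2 K l a b =
  'X_[xmon a + xmon b] - 'X_[xmon (swapc l a b) + xmon (swapc l b a)].
Proof. by rewrite /minor2 /xvar !mpolyXD. Qed.

Definition fiber_sum (m0 : M) (f : P) : K :=
  \sum_(m : bmultinom (nvars r) (mdeg m0).+1 | fiber m0 m) f@_m.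

Fact fiber_sum_is_linear (m0 : M) : linear_for *%R (fiber_sum m0).
Proof.
move=> c f g; rewrite /fiber_sum mulr_sumr -big_split.
by apply: eq_bigr => m _; rewrite mcoeffD mcoeffZ.
Qed.

HB.instance Definition _ (m0 : M) :=
  GRing.isLinear.Build K P K *%R (fiber_sum m0) (fiber_sum_is_linear m0).

Lemma fiber_sumX (m0 w : M) : fiber_sum m0 'X_[w] = (fiber m0 w)%:R.
Proof.
rewrite /fiber_sum; have [fib_w|nfib_w] := boolP (fiber m0 w).
  have deg_w : (mdeg w < (mdeg m0).+1)%N by case/fiberP: fib_w => ->.
  rewrite (bigD1 (BMultinom deg_w)) //= mcoeffX eqxx big1 ?addr0 // => m /andP[_ ne].
  by rewrite mcoeffX; case: eqP => // ewm; case/eqP: ne; apply: val_inj.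
rewrite big1 // => m fib_m; rewrite mcoeffX; case: eqP => // ewm.
by rewrite ewm fib_m in nfib_w.
Qed.

Lemma fiber_sum_binomial (m0 U U' : M) (c : P) : mdeg U = mdeg U' ->
  (forall j v, marginal U j v = marginal U' j v) ->
  fiber_sum m0 (c * ('X_[U] - 'X_[U'])) = 0.
Proof.
move=> deg_U marg_U; rewrite [c]mpolyE mulr_suml raddf_sum big1 // => m _.
rewrite /= -scalerAl mulrBr -!mpolyXD linearZ linearB /= !fiber_sumX.
by rewrite (fiberDl m0 m deg_U marg_U) subrr mulr0.
Qed.

Lemma fiber_sum_I2 (m0 : M) (f : P) : @I2 K n r f -> fiber_sum m0 f = 0.
Proof.
case=> s [s_minors ->]; rewrite raddf_sum big_seq big1 // => -[c g] /= cg_in.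
have [l [a [b ->]]] := s_minors _ _ cg_in.
rewrite minor2E; apply: fiber_sum_binomial; first by rewrite !mdeg_xmon2.
by move=> j v; rewrite marginal_swapc.
Qed.

Lemma fiber_sum_lead (m0 : M) (f : P) : sorted_mon m0 -> is_lead_mon f m0 ->
  fiber_sum m0 f = f@_m0.
Proof.
move=> sorted_m0 [m0_in m0_max].
have fib_m0 : fiber m0 m0 by apply/fiberP.
rewrite /fiber_sum (bigD1 (BMultinom (ltnSn (mdeg m0)))) //= big1 ?addr0 //.
move=> m /andP[fib_m ne_m]; apply/eqP; apply: contraT; rewrite -mcoeff_msupp.
have ne_m' : bmnm m <> m0 by move=> eq_m; case/eqP: ne_m; apply: val_inj.
case/m0_max => [//|lt_m]; case: (drl_lt_irr (drl_lt_trans lt_m _)).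
exact: sorted_mon_fiber_least.
Qed.

Lemma ideal_gen_sub (S : P -> Prop) (g : P) : S g -> ideal_gen S g.
Proof.
move=> Sg; exists [:: (1, g)]; split; last by rewrite big_seq1 mul1r.
by move=> c g'; rewrite mem_seq1 => /eqP[_ ->].
Qed.

End BoxMatrix.

Theorem theorem1p11 (K : fieldType) (n : nat) (r : 'I_n -> nat) :
  (2 <= n)%N -> groebner_basis (@minors2 K n r) (@I2 K n r).
Proof.
move=> _; split=> [g|f I2f f_neq0]; first exact: ideal_gen_sub.
have [mf lead_f] := ex_lead_mon f_neq0.
have unsorted_mf : ~~ sorted_mon mf.
  apply/negP => sorted_mf; have := lead_f.1.
  by rewrite mcoeff_msupp -(fiber_sum_lead sorted_mf lead_f) fiber_sum_I2 ?eqxx.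
have [a [b [l [dvd_mf lt_swap]]]] := unsorted_mon_swap unsorted_mf.
have [minor_neq0 lead_minor] := lead_mon_binomial K lt_swap.
rewrite -minor2E in minor_neq0 lead_minor.
by exists (minor2 K l a b), (xmon a + xmon b)%MM, mf; split => //; exists l, a, b.
Qed.
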